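(* Consider problem (P) and assume it has an optimal solution $\mathbf{x}^*$ with an associated Lagrange multiplier $\mu^*>0$ for the resource constraint, and that Case 1 or Case 2 holds. Let $\mu^k\ge 0$ be arbitrary and put $\mathbf{x}^k:=\mathbf{x}(\mu^k)$. (i) If Case 1 holds and $\sum_{j\in J} g_j(x_j^k)<b$, then $x_j^*=l_j$ for all $j\in L(\mu^k)$. (ii) If Case 1 holds and $\sum_{j\in J} g_j(x_j^k)>b$, then $x_j^*=u_j$ for all $j\in U(\mu^k)$. (iii) If Case 2 holds and $\sum_{j\in J} g_j(x_j^k)<b$, then $x_j^*=u_j$ for all $j\in U(\mu^k)$. (iv) If Case 2 holds and $\sum_{j\in J} g_j(x_j^k)>b$, then $x_j^*=l_j$ for all $j\in L(\mu^k)$.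
   Context: Let $J=\{1,\dots,n\}$. For $j\in J$ let $\phi_j,g_j:\mathbb{R}\to\mathbb{R}$ be convex and continuously differentiable, with $\phi_j$ strictly convex, and let $-\infty<l_j<u_j<\infty$, $b\in\mathbb{R}$. Problem (P) is: minimize $\sum_{j\in J}\phi_j(x_j)$ subject to $\sum_{j\in J} g_j(x_j)\le b$ and $l_j\le x_j\le u_j$ for $j\in J$. A pair $(\mathbf{x}^*,\mu^* )$ is an optimal solution with Lagrange multiplier if $\mu^*\ge0$, $\sum_j g_j(x_j^* )\le b$, $\mu^*(\sum_j g_j(x_j^* )-b)=0$, $x_j^*\in[l_j,u_j]$, and for each $j$: $x_j^*=l_j$ if $\phi_j'(x_j^* )>-\mu^*g_j'(x_j^* )$, $x_j^*=u_j$ if $\phi_j'(x_j^* )<-\mu^*g_j'(x_j^* )$, and otherwise $\phi'_j(x_j^* )=-\mu^* g'_j(x_j^* )$ (i.e. $x_j^*$ minimizes $\phi_j+\mu^*g_j$ over $[l_j,u_j]$). For $\mu\ge 0$, $x_j(\mu)$ denotes the unique minimizer of $\phi_j(x_j)+\mu g_j(x_j)$ over $[l_j,u_j]$, and $\mathbf{x}(\mu)=(x_j(\mu))_{j\in J}$. Define $L(\mu):=\{j\in J: x_j(\mu)=l_j\}$ and $U(\mu):=\{j\in J: x_j(\mu)=u_j\}$. Assume $g_j'\neq0$ on $[l_j,u_j]$ and let $\mu_j(x):=-\phi_j'(x)/g_j'(x)$. Case 1: for all $j$, $g_j$ is decreasing and $\mu_j$ is strictly increasing on $[l_j,u_j]$.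 Case 2: for all $j$, $g_j$ is increasing and $\mu_j$ is strictly decreasing on $[l_j,u_j]$. *)

(* classical reals. Indices J = {1..n} are represented 0-based as j < n. *)
From Stdlib Require Import Reals Lra.
Open Scope R_scope.

Fixpoint sumJ (n : nat) (f : nat -> R) : R :=
  match n with
  | O => 0
  | S m => sumJ m f + f m
  end.

Definition convex (f : R -> R) : Prop :=
  forall x y t, 0 <= t <= 1 -> f (t * x + (1 - t) * y) <= t * f x + (1 - t) * f y.

Definition strictly_convex (f : R -> R) : Prop :=
  forall x y t, x <> y -> 0 < t < 1 ->
    f (t * x + (1 - t) * y) < t * f x + (1 - t) * f y.

Definition C1_with_deriv (f f' : R -> R) : Prop :=
  (forall x, derivable_pt_lim f x (f' x)) /\ continuity f'.

Definition is_min_on (phi g : R -> R) (mu l u xj : R) : Prop :=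
  l <= xj <= u /\
  forall y, l <= y <= u -> phi xj + mu * g xj <= phi y + mu * g y.

Definition opt_with_multiplier (n : nat) (phi' g g' : nat -> R -> R)
    (l u : nat -> R) (b : R) (xs : nat -> R) (mus : R) : Prop :=
  0 <= mus /\
  sumJ n (fun j => g j (xs j)) <= b /\
  mus * (sumJ n (fun j => g j (xs j)) - b) = 0 /\
  forall j, (j < n)%nat ->
    l j <= xs j <= u j /\
    (phi' j (xs j) > - mus * g' j (xs j) -> xs j = l j) /\
    (phi' j (xs j) < - mus * g' j (xs j) -> xs j = u j).
(* the "otherwise phi' = -mu g'" clause is automatic by trichotomy *)

Definition decreasing_on (f : R -> R) (l u : R) : Prop :=
  forall x y, l <= x <= u -> l <= y <= u -> x <= y -> f y <= f x.
Definition increasing_on (f : R -> R) (l u : R) : Prop :=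
  forall x y, l <= x <= u -> l <= y <= u -> x <= y -> f x <= f y.
Definition strictly_increasing_on (f : R -> R) (l u : R) : Prop :=
  forall x y, l <= x <= u -> l <= y <= u -> x < y -> f x < f y.
Definition strictly_decreasing_on (f : R -> R) (l u : R) : Prop :=
  forall x y, l <= x <= u -> l <= y <= u -> x < y -> f y < f x.

Definition muj (phi' g' : nat -> R -> R) (j : nat) (x : R) : R :=
  - phi' j x / g' j x.

Definition case1 (n : nat) (phi' g g' : nat -> R -> R) (l u : nat -> R) : Prop :=
  forall j, (j < n)%nat ->
    decreasing_on (g j) (l j) (u j) /\
    strictly_increasing_on (muj phi' g' j) (l j) (u j).

Definition case2 (n : nat) (phi' g g' : nat -> R -> R) (l u : nat -> R) : Prop :=
  forall j, (j < n)%nat ->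
    increasing_on (g j) (l j) (u j) /\
    strictly_decreasing_on (muj phi' g' j) (l j) (u j).

(* Both x* and x^k satisfy the first-order conditions of their one-dimensional
   subproblems, for the multipliers mu* and mu^k.  When g_j' < 0, such a condition
   says mu_j(x_j) <= mu if x_j > l_j and mu <= mu_j(x_j) if x_j < u_j (reversed
   when g_j' > 0), so strict monotonicity of mu_j turns an inequality between two
   first-order points into a strict inequality between their multipliers.  Hence
   x_j(mu) is monotone in mu and, in both cases, the resource sum_j g_j(x_j(mu))
   is nonincreasing in mu.  Complementary slackness with mu* > 0 gives
   sum_j g_j(x*_j) = b, so sum_j g_j(x^k_j) < b forces mu* < mu^k and
   sum_j g_j(x^k_j) > b forces mu^k < mu*.  If, in Case 1, x^k_j = l_j < x*_j, the
   first-order conditions give mu^k <= mu_j(l_j) < mu_j(x*_j) <= mu*; the other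
   three parts are symmetric. *)
From Stdlib Require Import Reals Lra.
Open Scope R_scope.

Lemma pos_deriv_right_gt f x d u : derivable_pt_lim f x d -> 0 < d -> x < u ->
  exists y, x < y <= u /\ f x < f y.
Proof.
  intros Hf Hd Hxu.
  destruct (Hf (d / 2) ltac:(lra)) as [[del Hdel0] Hdel]; simpl in Hdel.
  set (h := Rmin (del / 2) (u - x)).
  assert (Hh0 : 0 < h) by (apply Rmin_glb_lt; lra).
  assert (Hh1 : h <= del / 2) by apply Rmin_l.
  assert (Hh2 : h <= u - x) by apply Rmin_r.
  specialize (Hdel h ltac:(lra) ltac:(rewrite Rabs_pos_eq; lra)).
  exists (x + h); split; [lra|].
  set (q := (f (x + h) - f x) / h) in Hdel.
  assert (Hq : f (x + h) - f x = q * h) by (unfold q; field; lra).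
  apply Rabs_def2 in Hdel; nra.
Qed.

Lemma pos_deriv_left_lt f x d l : derivable_pt_lim f x d -> 0 < d -> l < x ->
  exists y, l <= y < x /\ f y < f x.
Proof.
  intros Hf Hd Hlx.
  destruct (Hf (d / 2) ltac:(lra)) as [[del Hdel0] Hdel]; simpl in Hdel.
  set (h := Rmin (del / 2) (x - l)).
  assert (Hh0 : 0 < h) by (apply Rmin_glb_lt; lra).
  assert (Hh1 : h <= del / 2) by apply Rmin_l.
  assert (Hh2 : h <= x - l) by apply Rmin_r.
  specialize (Hdel (- h) ltac:(lra) ltac:(rewrite Rabs_Ropp, Rabs_pos_eq; lra)).
  exists (x + - h); split; [lra|].
  set (q := (f (x + - h) - f x) / - h) in Hdel.
  assert (Hq : f (x + - h) - f x = q * - h) by (unfold q; field; lra).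
  apply Rabs_def2 in Hdel; nra.
Qed.

Lemma decreasing_on_deriv_nonpos g g' l u x :
  (forall y, derivable_pt_lim g y (g' y)) -> decreasing_on g l u ->
  l < u -> l <= x <= u -> g' x <= 0.
Proof.
  intros Hg Hdec Hlu Hx.
  destruct (Rle_or_lt (g' x) 0) as [|Hpos]; [assumption|exfalso].
  destruct (Rlt_or_le x u) as [Hxu|Hxu].
  - destruct (pos_deriv_right_gt _ _ _ _ (Hg x) Hpos Hxu) as [y [Hy Hgy]].
    specialize (Hdec x y Hx ltac:(lra) ltac:(lra)); lra.
  - destruct (pos_deriv_left_lt _ _ _ l (Hg x) Hpos ltac:(lra)) as [y [Hy Hgy]].
    specialize (Hdec y x ltac:(lra) Hx ltac:(lra)); lra.
Qed.

Lemma increasing_on_deriv_nonneg g g' l u x :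
  (forall y, derivable_pt_lim g y (g' y)) -> increasing_on g l u ->
  l < u -> l <= x <= u -> 0 <= g' x.
Proof.
  intros Hg Hinc Hlu Hx.
  enough (- g' x <= 0) by lra.
  apply (decreasing_on_deriv_nonpos (fun y => - g y) (fun y => - g' y) l u);
    [| |assumption|assumption].
  - intro y; apply (derivable_pt_lim_opp g), Hg.
  - intros a c Ha Hc Hac; specialize (Hinc a c Ha Hc Hac); lra.
Qed.

Definition kkt_point (ph' g' : R -> R) (l u mu x : R) : Prop :=
  l <= x <= u /\
  (l < x -> ph' x + mu * g' x <= 0) /\
  (x < u -> 0 <= ph' x + mu * g' x).

Lemma min_on_kkt_point ph g ph' g' l u mu x :
  (forall y, derivable_pt_lim ph y (ph' y)) ->
  (forall y, derivable_pt_lim g y (g' y)) ->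
  is_min_on ph g mu l u x -> kkt_point ph' g' l u mu x.
Proof.
  intros Hph Hg [Hx Hmin].
  assert (HD : derivable_pt_lim (fun y => ph y + mu * g y) x (ph' x + mu * g' x)).
  { apply (derivable_pt_lim_plus ph (mult_real_fct mu g)); [apply Hph|].
    apply derivable_pt_lim_scal, Hg. }
  split; [exact Hx|split; intro Hside].
  - destruct (Rle_or_lt (ph' x + mu * g' x) 0) as [|Hpos]; [assumption|exfalso].
    destruct (pos_deriv_left_lt _ _ _ _ HD Hpos Hside) as [y [Hy Hlt]].
    specialize (Hmin y ltac:(lra)); lra.
  - destruct (Rle_or_lt 0 (ph' x + mu * g' x)) as [|Hneg]; [assumption|exfalso].
    destruct (pos_deriv_right_gt _ _ _ u (derivable_pt_lim_opp _ _ _ HD)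
                ltac:(lra) Hside) as [y [Hy Hlt]].
    specialize (Hmin y ltac:(lra)); unfold opp_fct in Hlt; lra.
Qed.

Lemma kkt_point_of_complementarity ph' g' l u mu x :
  l <= x <= u ->
  (ph' x > - mu * g' x -> x = l) ->
  (ph' x < - mu * g' x -> x = u) ->
  kkt_point ph' g' l u mu x.
Proof.
  intros Hx Hlow Hup; split; [exact Hx|split; intro Hside].
  - destruct (Rle_or_lt (ph' x + mu * g' x) 0) as [|Hpos]; [assumption|].
    assert (x = l) by (apply Hlow; lra); lra.
  - destruct (Rle_or_lt 0 (ph' x + mu * g' x)) as [|Hneg]; [assumption|].
    assert (x = u) by (apply Hup; lra); lra.
Qed.

Lemma ratio_bounds_of_neg a d mu : d < 0 ->
  (0 <= a + mu * d -> mu <= - a / d) /\ (a + mu * d <= 0 -> - a / d <= mu).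
Proof.
  intros Hd; assert (Ha : a = - (- a / d) * d) by (field; lra).
  set (r := - a / d) in *; clearbody r; subst a; split; intro; nra.
Qed.

Lemma ratio_bounds_of_pos a d mu : 0 < d ->
  (0 <= a + mu * d -> - a / d <= mu) /\ (a + mu * d <= 0 -> mu <= - a / d).
Proof.
  intros Hd; assert (Ha : a = - (- a / d) * d) by (field; lra).
  set (r := - a / d) in *; clearbody r; subst a; split; intro; nra.
Qed.

Section Coordinate.

Variables ph' g g' : R -> R.
Variables l u : R.
Hypothesis g_deriv : forall y, derivable_pt_lim g y (g' y).
Hypothesis l_lt_u : l < u.
Hypothesis g'_neq0 : forall x, l <= x <= u -> g' x <> 0.

Lemma kkt_multiplier_lt_of_decreasing mu1 mu2 x1 x2 :
  decreasing_on g l u -> strictly_increasing_on (fun x => - ph' x / g' x) l u ->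
  kkt_point ph' g' l u mu1 x1 -> kkt_point ph' g' l u mu2 x2 ->
  x1 < x2 -> mu1 < mu2.
Proof.
  intros Hdec Hmu [Hx1 [_ Hfree1]] [Hx2 [Hfree2 _]] Hlt.
  assert (Hd1 : g' x1 < 0).
  { pose proof (decreasing_on_deriv_nonpos g g' l u x1 g_deriv Hdec l_lt_u Hx1).
    pose proof (g'_neq0 x1 Hx1); lra. }
  assert (Hd2 : g' x2 < 0).
  { pose proof (decreasing_on_deriv_nonpos g g' l u x2 g_deriv Hdec l_lt_u Hx2).
    pose proof (g'_neq0 x2 Hx2); lra. }
  specialize (Hfree1 ltac:(lra)); specialize (Hfree2 ltac:(lra)).
  pose proof (proj1 (ratio_bounds_of_neg _ _ mu1 Hd1) Hfree1).
  pose proof (proj2 (ratio_bounds_of_neg _ _ mu2 Hd2) Hfree2).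
  specialize (Hmu x1 x2 Hx1 Hx2 Hlt); lra.
Qed.

Lemma kkt_multiplier_lt_of_increasing mu1 mu2 x1 x2 :
  increasing_on g l u -> strictly_decreasing_on (fun x => - ph' x / g' x) l u ->
  kkt_point ph' g' l u mu1 x1 -> kkt_point ph' g' l u mu2 x2 ->
  x1 < x2 -> mu2 < mu1.
Proof.
  intros Hinc Hmu [Hx1 [_ Hfree1]] [Hx2 [Hfree2 _]] Hlt.
  assert (Hd1 : 0 < g' x1).
  { pose proof (increasing_on_deriv_nonneg g g' l u x1 g_deriv Hinc l_lt_u Hx1).
    pose proof (g'_neq0 x1 Hx1); lra. }
  assert (Hd2 : 0 < g' x2).
  { pose proof (increasing_on_deriv_nonneg g g' l u x2 g_deriv Hinc l_lt_u Hx2).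
    pose proof (g'_neq0 x2 Hx2); lra. }
  specialize (Hfree1 ltac:(lra)); specialize (Hfree2 ltac:(lra)).
  pose proof (proj1 (ratio_bounds_of_pos _ _ mu1 Hd1) Hfree1).
  pose proof (proj2 (ratio_bounds_of_pos _ _ mu2 Hd2) Hfree2).
  specialize (Hmu x1 x2 Hx1 Hx2 Hlt); lra.
Qed.

Lemma kkt_resource_antitone mu1 mu2 x1 x2 :
  (decreasing_on g l u /\ strictly_increasing_on (fun x => - ph' x / g' x) l u) \/
  (increasing_on g l u /\ strictly_decreasing_on (fun x => - ph' x / g' x) l u) ->
  mu1 <= mu2 -> kkt_point ph' g' l u mu1 x1 -> kkt_point ph' g' l u mu2 x2 ->
  g x2 <= g x1.
Proof.
  intros [[Hdec Hmu] | [Hinc Hmu]] Hle Hk1 Hk2;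
    pose proof (proj1 Hk1) as Hx1; pose proof (proj1 Hk2) as Hx2.
  - apply Hdec; [exact Hx1|exact Hx2|].
    apply Rnot_lt_le; intro Hlt.
    pose proof (kkt_multiplier_lt_of_decreasing _ _ _ _ Hdec Hmu Hk2 Hk1 Hlt); lra.
  - apply Hinc; [exact Hx2|exact Hx1|].
    apply Rnot_lt_le; intro Hlt.
    pose proof (kkt_multiplier_lt_of_increasing _ _ _ _ Hinc Hmu Hk1 Hk2 Hlt); lra.
Qed.

End Coordinate.

Lemma sumJ_le n f h : (forall j, (j < n)%nat -> f j <= h j) -> sumJ n f <= sumJ n h.
Proof.
  induction n as [|n IH]; simpl; intros Hle; [lra|].
  assert (sumJ n f <= sumJ n h) by (apply IH; intros; apply Hle; auto).
  specialize (Hle n ltac:(auto)); lra.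
Qed.

Section Family.

Variable n : nat.
Variables phi' g g' : nat -> R -> R.
Variables l u : nat -> R.
Hypothesis g_deriv : forall j, (j < n)%nat -> forall y, derivable_pt_lim (g j) y (g' j y).
Hypothesis l_lt_u : forall j, (j < n)%nat -> l j < u j.
Hypothesis g'_neq0 : forall j, (j < n)%nat -> forall x, l j <= x <= u j -> g' j x <> 0.

Let kkt j := kkt_point (phi' j) (g' j) (l j) (u j).
Let resource x := sumJ n (fun j => g j (x j)).

Lemma case1_kkt_multiplier_lt j mu1 mu2 x1 x2 :
  case1 n phi' g g' l u -> (j < n)%nat ->
  kkt j mu1 x1 -> kkt j mu2 x2 -> x1 < x2 -> mu1 < mu2.
Proof.
  intros Hc Hj; destruct (Hc j Hj) as [Hdec Hmu].
  exact (kkt_multiplier_lt_of_decreasing _ _ _ _ _ (g_deriv j Hj) (l_lt_u j Hj)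
           (g'_neq0 j Hj) _ _ _ _ Hdec Hmu).
Qed.

Lemma case2_kkt_multiplier_lt j mu1 mu2 x1 x2 :
  case2 n phi' g g' l u -> (j < n)%nat ->
  kkt j mu1 x1 -> kkt j mu2 x2 -> x1 < x2 -> mu2 < mu1.
Proof.
  intros Hc Hj; destruct (Hc j Hj) as [Hinc Hmu].
  exact (kkt_multiplier_lt_of_increasing _ _ _ _ _ (g_deriv j Hj) (l_lt_u j Hj)
           (g'_neq0 j Hj) _ _ _ _ Hinc Hmu).
Qed.

Lemma multiplier_lt_of_resource_lt mu1 mu2 x1 x2 :
  case1 n phi' g g' l u \/ case2 n phi' g g' l u ->
  (forall j, (j < n)%nat -> kkt j mu1 (x1 j)) ->
  (forall j, (j < n)%nat -> kkt j mu2 (x2 j)) ->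
  resource x1 < resource x2 -> mu2 < mu1.
Proof.
  intros Hcase Hk1 Hk2 Hres.
  apply Rnot_le_lt; intro Hle.
  enough (resource x2 <= resource x1) by lra.
  apply sumJ_le; intros j Hj.
  apply (kkt_resource_antitone (phi' j) (g j) (g' j) (l j) (u j)
           (g_deriv j Hj) (l_lt_u j Hj) (g'_neq0 j Hj) mu1 mu2);
    [| exact Hle | exact (Hk1 j Hj) | exact (Hk2 j Hj)].
  destruct Hcase as [Hc | Hc]; [left | right]; exact (Hc j Hj).
Qed.

End Family.

Theorem proposition1
  (n : nat) (phi phi' g g' : nat -> R -> R) (l u : nat -> R) (b : R)
  (Hphi : forall j, (j < n)%nat ->
     C1_with_deriv (phi j) (phi' j) /\ convex (phi j) /\ strictly_convex (phi j))
  (Hg : forall j, (j < n)%nat -> C1_with_deriv (g j) (g' j) /\ convex (g j))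
  (Hlu : forall j, (j < n)%nat -> l j < u j)
  (Hg'nz : forall j, (j < n)%nat -> forall x, l j <= x <= u j -> g' j x <> 0)
  (xs : nat -> R) (mus : R)
  (Hopt : opt_with_multiplier n phi' g g' l u b xs mus)
  (Hmus : 0 < mus)
  (Hcase : case1 n phi' g g' l u \/ case2 n phi' g g' l u)
  (muk : R) (Hmuk : 0 <= muk)
  (xk : nat -> R)
  (Hxk : forall j, (j < n)%nat -> is_min_on (phi j) (g j) muk (l j) (u j) (xk j)) :
  (case1 n phi' g g' l u -> sumJ n (fun j => g j (xk j)) < b ->
     forall j, (j < n)%nat -> xk j = l j -> xs j = l j) /\
  (case1 n phi' g g' l u -> sumJ n (fun j => g j (xk j)) > b ->
     forall j, (j < n)%nat -> xk j = u j -> xs j = u j) /\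
  (case2 n phi' g g' l u -> sumJ n (fun j => g j (xk j)) < b ->
     forall j, (j < n)%nat -> xk j = u j -> xs j = u j) /\
  (case2 n phi' g g' l u -> sumJ n (fun j => g j (xk j)) > b ->
     forall j, (j < n)%nat -> xk j = l j -> xs j = l j).
Proof.
  destruct Hopt as [_ [_ [Hslack Hxs]]].
  assert (Hres : sumJ n (fun j => g j (xs j)) = b).
  { destruct (Rmult_integral _ _ Hslack); lra. }
  assert (Hgd : forall j, (j < n)%nat -> forall y, derivable_pt_lim (g j) y (g' j y))
    by (intros j Hj; exact (proj1 (proj1 (Hg j Hj)))).
  assert (Hks : forall j, (j < n)%nat -> kkt_point (phi' j) (g' j) (l j) (u j) mus (xs j)).
  { intros j Hj; destruct (Hxs j Hj) as [Hx [Hlow Hup]].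
    exact (kkt_point_of_complementarity _ _ _ _ _ _ Hx Hlow Hup). }
  assert (Hkk : forall j, (j < n)%nat -> kkt_point (phi' j) (g' j) (l j) (u j) muk (xk j)).
  { intros j Hj; apply (min_on_kkt_point (phi j) (g j));
      [exact (proj1 (proj1 (Hphi j Hj))) | exact (Hgd j Hj) | exact (Hxk j Hj)]. }
  pose proof (multiplier_lt_of_resource_lt n phi' g g' l u Hgd Hlu Hg'nz) as Hmult.
  pose proof (case1_kkt_multiplier_lt n phi' g g' l u Hgd Hlu Hg'nz) as Hc1.
  pose proof (case2_kkt_multiplier_lt n phi' g g' l u Hgd Hlu Hg'nz) as Hc2.
  split; [|split; [|split]]; intros Hc Hsum j Hj Hxkj;
    destruct (proj1 (Hks j Hj)) as [Hlow Hup];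
    [apply Rle_antisym; [apply Rnot_lt_le; intro Hlt|exact Hlow]
    |apply Rle_antisym; [exact Hup|apply Rnot_lt_le; intro Hlt]
    |apply Rle_antisym; [exact Hup|apply Rnot_lt_le; intro Hlt]
    |apply Rle_antisym; [apply Rnot_lt_le; intro Hlt|exact Hlow]].
  - pose proof (Hmult _ _ _ _ Hcase Hkk Hks ltac:(lra)).
    pose proof (Hc1 j _ _ _ _ Hc Hj (Hkk j Hj) (Hks j Hj) ltac:(lra)); lra.
  - pose proof (Hmult _ _ _ _ Hcase Hks Hkk ltac:(lra)).
    pose proof (Hc1 j _ _ _ _ Hc Hj (Hks j Hj) (Hkk j Hj) ltac:(lra)); lra.
  - pose proof (Hmult _ _ _ _ Hcase Hkk Hks ltac:(lra)).
    pose proof (Hc2 j _ _ _ _ Hc Hj (Hks j Hj) (Hkk j Hj) ltac:(lra)); lra.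
  - pose proof (Hmult _ _ _ _ Hcase Hks Hkk ltac:(lra)).
    pose proof (Hc2 j _ _ _ _ Hc Hj (Hkk j Hj) (Hks j Hj) ltac:(lra)); lra.
Qed.
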